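(* Let $p$ be an odd prime and $k\ge0$. For every $0\le l<p^k$ and $0\le l'<p^{k+1}$, every path $P\in\mathcal P(V_{1,l})\cup\mathcal P(W_{2,l'})$ has $\mathrm{des}(P)\in\{0,1\}$, and $$\mathcal M_{V_{1,l}}=\mathcal M_{W_{2,l'}}=\frac{p-1}{2}.$$
   Context: Fix an odd prime $p$ and an integer $k\ge 0$. For integers $0\le i<n$ write $\lambda(n,i)=(n-i,1^i)$ for the hook partition of $n$ with $n-i$ boxes in its first row and $i$ further boxes in its first column. If $\mu=\lambda(n',i')$ is obtained from $\lambda(n,i)$ by appending $m=(n'-i')-(n-i)\ge 0$ boxes to the first row and $n''=i'-i\ge 0$ boxes to the first column, we say $\mu$ is obtained by adding the block $B_{m,n''}$ ($m$ horizontal nodes, $n''$ vertical nodes). Put $x_s=p^k(sp-(s+1))$. The relevant part (''column $k$'') of the $p$-Bratteli diagram is the graded directed graph with vertices: on floor $2k+1$, $S_i=\lambda(p^k(p-1),i)$ for $0\le i<p^k(p-1)$; on floor $2(k+s)$ ($s\ge1$), $V_{s,l}=\lambda\big(p^k(2sp-(2s+1)),\,x_s+l\big)$ for $0\le l<p^k$; on floor $2(k+s)-1$ ($s\ge2$), $W_{s,l'}=\lambda\big(p^k((2s-1)p-2s),\,x_{s-1}+l'\big)$ for $0\le l'<p^{k+1}$; and edges, each labelled by the block added: (E1) $S_i\to V_{1,l}$ exactly when $i=p^kt+l$ with $0\le t\le p-2$, block $B_{p^kt,\,p^k(p-2-t)}$; (E2) for $s\ge2$, $0\le l<p^k$, $0\le\beta\le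 p-1$: $V_{s-1,l}\to W_{s,pl+\beta}$, block $B_{p^k(p-1)-((p-1)l+\beta),\,(p-1)l+\beta}$; (E3) for $s\ge 2$, $0\le l'<p^{k+1}$ and $t=\lfloor l'/p^k\rfloor$: $W_{s,l'}\to V_{s,l'-p^kt}$, block $B_{p^kt,\,p^k(p-1-t)}$. A path ending at a vertex $v$ is a sequence of edges starting at some $S_i$ and going up one floor at a time to $v$ ($S_i\to V_{1,\cdot}\to W_{2,\cdot}\to V_{2,\cdot}\to W_{3,\cdot}\to\cdots\to v$); $\mathcal P(v)$ is the set of all paths ending at $v$. The blocks of a path are numbered $B^2,B^3,\dots,B^N$: $B^2$ is the block of the edge leaving $S_i$, and for $j\ge2$, $B^{2j-1}$ is the block of the edge into $W_{j,\cdot}$ and $B^{2j}$ the block of the edge into $V_{j,\cdot}$. Write $B^j=B_{m_j,n_j}$. Descents: $1\in\mathrm{Des}(P)$ iff $m_2=p^kt$ with $0\le t<\frac{p-1}{2}$; $2\notin\mathrm{Des}(P)$; for $3\le j<N$, $j\in\mathrm{Des}(P)$ iff $m_j>m_{j+1}$ and $n_j<n_{j+1}$. $\mathrm{des}(P)=|\mathrm{Des}(P)|$. The $p^k$-Fibonacci number of a vertex $v$ is $\mathcal M_v=\sum_{P\in\mathcal P(v)}\mathrm{des}(P)$. *)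

From HB Require Import structures.
From mathcomp Require Import all_boot.
Set Implicit Arguments. Unset Strict Implicit. Unset Printing Implicit Defensive.

(* Vertices of column k of the p-Bratteli diagram:
   VS i   = S_i      (floor 2k+1)
   VV s l = V_{s,l}  (floor 2(k+s))
   VW s l = W_{s,l}  (floor 2(k+s)-1) *)
Inductive vtx := VS of nat | VV of nat & nat | VW of nat & nat.

Definition vtx_eq_dec : comparable vtx.
Proof. unfold comparable, decidable; decide equality; apply: eq_comparable. Defined.
HB.instance Definition _ := hasDecEq.Build vtx (compareP vtx_eq_dec).

(* A labelled edge: (source, target, block (m, n)) meaning B_{m,n}. *)
Definition edge := (vtx * vtx * (nat * nat))%type.

Definition is_edge (p k : nat) (u v : vtx) (b : nat * nat) : Prop :=
  match u, v with
  | VS i, VV s l =>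
      s = 1 /\ i < p ^ k * (p - 1) /\ l < p ^ k /\
      exists t, t <= p - 2 /\ i = p ^ k * t + l /\
                b = (p ^ k * t, p ^ k * (p - 2 - t))
  | VV s0 l, VW s l' =>
      2 <= s /\ s0 = s - 1 /\ l < p ^ k /\
      exists beta, beta <= p - 1 /\ l' = p * l + beta /\
                   b = (p ^ k * (p - 1) - ((p - 1) * l + beta), (p - 1) * l + beta)
  | VW s l', VV s' l =>
      2 <= s /\ s' = s /\ l' < p ^ (k + 1) /\
      let t := l' %/ p ^ k in
      l = l' - p ^ k * t /\ b = (p ^ k * t, p ^ k * (p - 1 - t))
  | _, _ => False
  end.

Fixpoint walk (p k : nat) (u : vtx) (es : seq edge) (w : vtx) : Prop :=
  match es with
  | [::] => u = w
  | e :: es' => e.1.1 = u /\ is_edge p k e.1.1 e.1.2 e.2 /\ walk p k e.1.2 es' w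
  end.

Definition is_path (p k : nat) (P : seq edge) (v : vtx) : Prop :=
  exists i, i < p ^ k * (p - 1) /\ walk p k (VS i) P v.

(* Blocks B^2, ..., B^N of a path: B^j = nth (j-2); N = size P + 1. *)
Definition blk (P : seq edge) (j : nat) : nat * nat := nth (0, 0) (map snd P) (j - 2).
Definition mj (P : seq edge) j := (blk P j).1.
Definition nj (P : seq edge) j := (blk P j).2.

(* des(P) = |Des(P)|: 1 in Des iff m_2 = p^k t with 0 <= t < (p-1)/2;
   2 is never in Des; for 3 <= j < N, j in Des iff m_j > m_{j+1} and n_j < n_{j+1}. *)
Definition des (p k : nat) (P : seq edge) : nat :=
  ((0 < size P) && [exists t : 'I_((p - 1) %/ 2), mj P 2 == p ^ k * t])
  + count (fun j => (mj P j > mj P j.+1) && (nj P j < nj P j.+1))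
          (iota 3 (size P + 1 - 3)).

(* "M_v = M": summing des over a duplicate-free enumeration of the (finite) set P(v). *)
Definition fib_is (p k : nat) (v : vtx) (M : nat) : Prop :=
  exists L : seq (seq edge),
    uniq L /\ (forall P, P \in L <-> is_path p k P v) /\ \sum_(P <- L) des p k P = M.

From mathcomp Require Import all_boot.
From mathcomp Require Import zify.
Set Implicit Arguments. Unset Strict Implicit.

(* The diagram has no edge into any S_i, a unique edge into V_{1,l} from each
   S_{p^k t + l} (t < p - 1) and a unique edge into W_{2,l'}, coming from
   V_{1, l' / p}.  Hence the paths ending at V_{1,l} or W_{2,l'} are indexed by
   t < p - 1, and since they have at most two blocks, des(P) reduces to the
   single test "1 \in Des(P)", i.e. t < (p - 1) / 2. *)

Lemma walk_rcons p k u es e w :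
  walk p k u (rcons es e) w <->
  [/\ walk p k u es e.1.1, is_edge p k e.1.1 e.1.2 e.2 & e.1.2 = w].
Proof.
elim: es u => [|e' es IH] u /=.
  by split=> [[eu [he ew]] | [ue he ew]]; split.
by rewrite IH; split=> [[eu [he [hw he2 ew]]] | [[eu [he hw]] he2 ew]].
Qed.

Lemma is_path_rcons p k P e w :
  is_path p k (rcons P e) w <->
  [/\ is_path p k P e.1.1, is_edge p k e.1.1 e.1.2 e.2 & e.1.2 = w].
Proof.
rewrite /is_path; split=> [[i [hi /walk_rcons [hw he ew]]] | [[i [hi hw]] he ew]].
  by split=> //; exists i.
by exists i; split=> //; apply/walk_rcons.
Qed.

Lemma is_path_VS p k P i :
  is_path p k P (VS i) <-> P = [::] /\ i < p ^ k * (p - 1).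
Proof.
split=> [[i0 [hi]] | [-> hi]]; last by exists i.
case/lastP: P => [/= [ei] | P e /walk_rcons [_ he ev]]; first by rewrite -ei.
by case: e he ev => [[u v] b] /=; case: u; case: v.
Qed.

Lemma sum_iota_ltn n m : \sum_(t <- iota 0 n) (t < m : nat) = minn m n.
Proof.
elim: n => [|n IH]; first by rewrite big_nil; lia.
by rewrite -addn1 iotaD big_cat big_seq1 IH /=; case: ltnP; lia.
Qed.

Lemma fib_is_of_param p k v (f : nat -> seq edge) n m :
  injective f -> (forall P, is_path p k P v <-> exists2 t, t < n & P = f t) ->
  (forall t, des p k (f t) = (t < m)) -> m <= n ->
  (forall P, is_path p k P v -> des p k P \in [:: 0; 1]) /\ fib_is p k v m.
Proof.
move=> f_inj hP hdes hmn; split.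
  by move=> P /hP [t _ ->]; rewrite hdes; case: (t < m).
exists (map f (iota 0 n)); split; [|split].
- by rewrite map_inj_uniq ?iota_uniq.
- move=> P; rewrite hP; split=> [/mapP [t] | [t ht ->]].
    by rewrite mem_iota => /andP [_ ht] ->; exists t.
  by apply: map_f; rewrite mem_iota.
- by rewrite big_map (eq_bigr _ (fun t _ => hdes t)) sum_iota_ltn; apply/minn_idPl.
Qed.

Section Column.

Variables p k : nat.
Hypothesis p_gt1 : 1 < p.

Let pk_gt0 : 0 < p ^ k. Proof. by rewrite expn_gt0; lia. Qed.

Definition edge_SV (l t : nat) : edge :=
  (VS (p ^ k * t + l), VV 1 l, (p ^ k * t, p ^ k * (p - 2 - t))).

Definition edge_VW (l' : nat) : edge :=
  (VV 1 (l' %/ p), VW 2 l',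
   (p ^ k * (p - 1) - ((p - 1) * (l' %/ p) + l' %% p),
    (p - 1) * (l' %/ p) + l' %% p)).

Lemma edge_SV_inj l : injective (edge_SV l).
Proof. by move=> t t' [] _ /eqP; rewrite eqn_pmul2l // => /eqP. Qed.

Lemma edge_into_V1 l e : l < p ^ k ->
  is_edge p k e.1.1 e.1.2 e.2 /\ e.1.2 = VV 1 l <->
  exists2 t, t < p - 1 & e = edge_SV l t.
Proof.
move=> hl; split=> [[] | [t ht ->]].
  case: e => [[[i|s0 l0|s0 l0] v] b] //= + ev; subst v => //=.
  - by move=> [_ [_ [_ [t [ht [-> ->]]]]]]; exists t => //; lia.
  - by move=> [h1 [h2 _]]; lia.
split=> //=; split=> //; split; first nia.
by split=> //; exists t; split=> //; lia.
Qed.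

Lemma divn_lt_expS l' : l' < p ^ (k + 1) -> l' %/ p < p ^ k.
Proof. by rewrite ltn_divLR ?(ltnW p_gt1) // -expnSr -(addn1 k). Qed.

Lemma edge_into_W2 l' e : l' < p ^ (k + 1) ->
  is_edge p k e.1.1 e.1.2 e.2 /\ e.1.2 = VW 2 l' <-> e = edge_VW l'.
Proof.
move=> hl'; have p_gt0 : 0 < p := ltnW p_gt1.
split=> [[] | ->].
  case: e => [[[i|s0 l0|s0 l0] v] b] //= + ev; subst v => //=.
  move=> [_ [-> [_ [beta [hb [el' ->]]]]]].
  have beta_lt : beta < p by lia.
  have hq : l' %/ p = l0 by rewrite el' mulnC divnMDl // divn_small ?addn0.
  have hr : l' %% p = beta by rewrite el' mulnC modnMDl modn_small.
  by rewrite /edge_VW hq hr.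
split=> //=; do 3 split=> //; first exact: divn_lt_expS.
exists (l' %% p); split; first by move: (l' %% p) (ltn_pmod l' p_gt0) => r; lia.
by split=> //; rewrite {1}(divn_eq l' p) mulnC.
Qed.

Lemma is_path_V1 l P : l < p ^ k ->
  is_path p k P (VV 1 l) <-> exists2 t, t < p - 1 & P = [:: edge_SV l t].
Proof.
move=> hl; split=> [| [t ht ->]].
  case/lastP: P => [[i [_ //]] | P e /is_path_rcons [hP he ev]].
  have [t ht de] := (edge_into_V1 e hl).1 (conj he ev).
  by move: hP; rewrite de => /is_path_VS [-> _]; exists t.
have [he ev] := (edge_into_V1 (edge_SV l t) hl).2 (ex_intro2 _ _ t ht erefl).
by apply/(is_path_rcons _ _ [::]); split=> //; apply/is_path_VS; split=> //; nia.
Qed.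

Lemma is_path_W2 l' P : l' < p ^ (k + 1) ->
  is_path p k P (VW 2 l') <->
  exists2 t, t < p - 1 & P = [:: edge_SV (l' %/ p) t; edge_VW l'].
Proof.
move=> hl'; have hq := divn_lt_expS hl'.
split=> [| [t ht ->]].
  case/lastP: P => [[i [_ //]] | P e /is_path_rcons [hP he ev]].
  move: hP; rewrite ((edge_into_W2 e hl').1 (conj he ev)) => /(is_path_V1 _ hq).
  by case=> t ht ->; exists t.
have [he ev] := (edge_into_W2 (edge_VW l') hl').2 erefl.
by apply/(is_path_rcons _ _ [:: _]); split=> //; apply/is_path_V1 => //; exists t.
Qed.

(* Paths with at most two blocks have no j with 3 <= j < N. *)
Lemma des_size_le2 x t n rest : size rest <= 1 ->
  des p k ((x, (p ^ k * t, n)) :: rest) = (t < (p - 1) %/ 2).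
Proof.
move=> hs; rewrite /des /mj /blk /=.
have -> : (size rest).+1 + 1 - 3 = 0 by lia.
rewrite addn0; congr (nat_of_bool _); apply/existsP/idP => [[t0] | ht].
  by rewrite eqn_pmul2l // => /eqP ->.
by exists (Ordinal ht).
Qed.

End Column.

Theorem mainTheorem2 (p k : nat) (pp : prime p) (podd : odd p) :
  (forall l, l < p ^ k ->
     (forall P, is_path p k P (VV 1 l) -> des p k P \in [:: 0; 1]) /\
     fib_is p k (VV 1 l) ((p - 1) %/ 2)) /\
  (forall l', l' < p ^ (k + 1) ->
     (forall P, is_path p k P (VW 2 l') -> des p k P \in [:: 0; 1]) /\
     fib_is p k (VW 2 l') ((p - 1) %/ 2)).
Proof.
have p_gt1 := prime_gt1 pp.
have half_le : (p - 1) %/ 2 <= p - 1 by apply: leq_div.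
split=> [l hl | l' hl'].
- apply: (fib_is_of_param _ (fun P => is_path_V1 p_gt1 P hl)) half_le.
    by move=> t t' /(congr1 (head (VS 0, VS 0, (0, 0)))) /(edge_SV_inj p_gt1).
  by move=> t; rewrite des_size_le2.
- apply: (fib_is_of_param _ (fun P => is_path_W2 p_gt1 P hl')) half_le.
    by move=> t t' /(congr1 (head (VS 0, VS 0, (0, 0)))) /(edge_SV_inj p_gt1).
  by move=> t; rewrite des_size_le2.
Qed.
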